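(* Let $k$ be a field and let $X$ be a $\mathcal{T}$-space which is locally weakly quasi-compact. Let $F\in\mathrm{Mod}(k_\mathcal{T})$ and let $U\subseteq X$ be open. Then $$\Gamma(U;\rho^{-1}F)\simeq\varprojlim_{V\subset\subset U,\,V\in\mathcal{T}}\Gamma(V;F).$$
   Context: For open subsets $V\subseteq U$ of a topological space $X$, write $V\subset\subset U$ if for every covering $\{U_i\}_{i\in I}$ of $U$ by open sets there is a finite $J\subseteq I$ with $V\subseteq\bigcup_{i\in J}U_i$; $\mathrm{Op}^c(U)$ is the set of such $V$. $X$ is locally weakly quasi-compact if for all open $U,V$: (LWC1) every $x\in U$ has a fundamental system of neighborhoods in $\mathrm{Op}^c(U)$; (LWC2) for $U'\in\mathrm{Op}^c(U)$, $V'\in\mathrm{Op}^c(V)$ one has $U'\cap V'\in\mathrm{Op}^c(U\cap V)$; (LWC3) for every $U'\in\mathrm{Op}^c(U)$ there is $W\in\mathrm{Op}^c(U)$ with $U'\subset\subset W$. Let $\mathcal{T}$ be a family of open subsets of $X$. A $\mathcal{T}$-subset of $X$ is a finite Boolean combination of elements of $\mathcal{T}$; a $\mathcal{T}$-connected subset is a $\mathcal{T}$-subset which is not the disjoint union of two proper $\mathcal{T}$-subsets that are both open and closed in it. $X$ is a $\mathcal{T}$-space if (i) $\mathcal{T}$ is a basis of the topology of $X$ and $\emptyset\in\mathcal{T}$; (ii) $\mathcal{T}$ is closed under finite unions and finite intersections; (iii) every $U\in\mathcal{T}$ has finitely many $\mathcal{T}$-connected components. $X_\mathcal{T}$ is the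 site whose underlying category is $\mathcal{T}$ (morphisms are inclusions), a family $\{U_i\}\subset\mathcal{T}$ of subsets of $U\in\mathcal{T}$ being a covering of $U$ iff it admits a finite subfamily whose union is $U$. $\mathrm{Mod}(k_\mathcal{T})$ (resp. $\mathrm{Mod}(k_X)$) is the category of sheaves of $k$-vector spaces on $X_\mathcal{T}$ (resp. $X$). $\rho:X\to X_\mathcal{T}$ is the natural morphism of sites, $\rho_*F(U)=F(U)$ for $U\in\mathcal{T}$, and $\rho^{-1}:\mathrm{Mod}(k_\mathcal{T})\to\mathrm{Mod}(k_X)$ is the left adjoint of $\rho_*$. *)

From HB Require Import structures.
From mathcomp Require Import all_boot all_order all_algebra.
From mathcomp Require Import boolp classical_sets functions cardinality topology.
Set Implicit Arguments. Unset Strict Implicit. Unset Printing Implicit Defensive.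
Import GRing.Theory.
Local Open Scope classical_set_scope.
Local Open Scope ring_scope.

Section Defs.
Variable X : topologicalType.

Definition open_covering (U : set X) (I : Type) (Ui : I -> set X) : Prop :=
  (forall i, open (Ui i) /\ Ui i `<=` U) /\ \bigcup_i Ui i = U.

Definition Opc (U V : set X) : Prop :=
  open V /\ V `<=` U /\
  forall (I : Type) (Ui : I -> set X), open_covering U Ui ->
    exists J : set I, finite_set J /\ V `<=` \bigcup_(i in J) Ui i.

Definition locally_weakly_quasi_compact : Prop :=
  (forall U : set X, open U -> forall x, U x ->
     forall N, nbhs x N -> exists W, Opc U W /\ W x /\ W `<=` N) /\
  (forall U V : set X, open U -> open V -> forall U' V',
     Opc U U' -> Opc V V' -> Opc (U `&` V) (U' `&` V')) /\
  (forall U : set X, open U -> forall U', Opc U U' ->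
     exists W, Opc U W /\ Opc W U').

Inductive Tsubset (T : set (set X)) : set X -> Prop :=
| Tsub_base A : T A -> Tsubset T A
| Tsub_compl A : Tsubset T A -> Tsubset T (~` A)
| Tsub_union A B : Tsubset T A -> Tsubset T B -> Tsubset T (A `|` B).

Definition open_in (A B : set X) : Prop := exists O, open O /\ B = O `&` A.
Definition closed_in (A B : set X) : Prop := exists C, closed C /\ B = C `&` A.

Definition Tconnected (T : set (set X)) (A : set X) : Prop :=
  Tsubset T A /\
  ~ (exists B C : set X,
       [/\ Tsubset T B, Tsubset T C, B <> A, C <> A &
       [/\ B `&` C = set0, B `|` C = A,
           open_in A B /\ closed_in A B & open_in A C /\ closed_in A C]]).

Definition Tcomponent (T : set (set X)) (U C : set X) : Prop :=
  [/\ C `<=` U, Tconnected T C, C <> set0 &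
      forall D, Tconnected T D -> C `<=` D -> D `<=` U -> D = C].

Definition Tspace (T : set (set X)) : Prop :=
  [/\ (forall A, T A -> open A),
      (forall U : set X, open U -> forall x, U x -> exists B, [/\ T B, B x & B `<=` U]),
      T set0,
      (forall A B, T A -> T B -> T (A `|` B) /\ T (A `&` B)) &
      (forall U, T U -> finite_set (Tcomponent T U))].

(* Sections are given for every subset of X, but
   only those in P are relevant: all axioms are stated on P. *)
Record presheaf (k : fieldType) (P : set (set X)) := Presheaf {
  sec : set X -> lmodType k;
  res : forall U V : set X, V `<=` U -> sec U -> sec V;
  res_linear : forall U V (h : V `<=` U) (a : k) (s t : sec U),
      res h (a *: s + t) = a *: res h s + res h t;
  res_id : forall U (h : U `<=` U), P U -> forall s, res h s = s;
  res_comp : forall U V W (hVU : V `<=` U) (hWV : W `<=` V) (hWU : W `<=` U),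
      P U -> P V -> P W -> forall s, res hWV (res hVU s) = res hWU s
}.
Arguments sec {k P} p U.
Arguments res {k P} p {U V} h s.

Definition glues (k : fieldType) (P : set (set X)) (F : presheaf k P)
    (U : set X) (I : Type) (Ui : I -> set X) (hi : forall i, Ui i `<=` U) :=
  forall s : forall i, sec F (Ui i),
    (forall i j, res F (@subIsetl _ (Ui i) (Ui j)) (s i)
               = res F (@subIsetr _ (Ui i) (Ui j)) (s j)) ->
    exists t : sec F U, (forall i, res F (hi i) t = s i) /\
      forall t' : sec F U, (forall i, res F (hi i) t' = s i) -> t' = t.

(* sheaves on the site X_T : coverings are families in T admitting a finite
   subfamily whose union is U *)
Definition is_sheaf_T (k : fieldType) (T : set (set X)) (F : presheaf k T) :=
  forall U, T U -> forall (I : Type) (Ui : I -> set X) (hi : forall i, Ui i `<=` U),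
    (forall i, T (Ui i)) ->
    (exists J : set I, finite_set J /\ \bigcup_(i in J) Ui i = U) ->
    glues F hi.

Definition is_sheaf_X (k : fieldType) (F : presheaf k open) :=
  forall U : set X, open U -> forall (I : Type) (Ui : I -> set X)
    (hi : forall i, Ui i `<=` U),
    (forall i, open (Ui i)) -> \bigcup_i Ui i = U ->
    glues F hi.

Definition is_morphism (k : fieldType) (Q P1 P2 : set (set X))
    (F : presheaf k P1) (G : presheaf k P2)
    (phi : forall U, sec F U -> sec G U) : Prop :=
  (forall U, Q U -> forall (a : k) (s t : sec F U),
      phi U (a *: s + t) = a *: phi U s + phi U t) /\
  (forall U V (h : V `<=` U), Q U -> Q V -> forall s,
      phi V (res F h s) = res G h (phi U s)).

Arguments is_morphism {k} Q {P1 P2} F G phi.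

(* (G, eta) is rho^{-1} F : G is a sheaf on X and eta : F -> rho_* G is the
   unit of the adjunction rho^{-1} -| rho_*, i.e. every morphism
   F -> rho_* H (H a sheaf on X) factors uniquely through eta. *)
Definition is_inverse_image (k : fieldType) (T : set (set X))
    (F : presheaf k T) (G : presheaf k open)
    (eta : forall U, sec F U -> sec G U) : Prop :=
  [/\ is_sheaf_X G, is_morphism T F G eta &
  forall (H : presheaf k open), is_sheaf_X H ->
    forall phi : forall U, sec F U -> sec H U, is_morphism T F H phi ->
    exists psi : forall U, sec G U -> sec H U,
      [/\ is_morphism open G H psi,
          (forall U, T U -> forall s, psi U (eta U s) = phi U s) &
          forall psi' : forall U, sec G U -> sec H U,
            is_morphism open G H psi' ->
            (forall U, T U -> forall s, psi' U (eta U s) = phi U s) ->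
            forall U, open U -> forall s, psi' U s = psi U s]].

End Defs.
Arguments sec {X k P} p U.
Arguments res {X k P} p {U V} h s.
Arguments is_morphism {X k} Q {P1 P2} F G phi.
Arguments is_inverse_image {X k T} F G eta.
Arguments is_sheaf_T {X k T} F.
Arguments is_sheaf_X {X k} F.
Arguments Tspace {X} T.
Arguments locally_weakly_quasi_compact X.

From HB Require Import structures.
From mathcomp Require Import all_boot all_order all_algebra.
From mathcomp Require Import boolp classical_sets functions cardinality topology.
Import GRing.Theory.
Local Open Scope classical_set_scope.
Local Open Scope ring_scope.

(* Let H(W) be the space of compatible families (t_V) with V ∈ T and
   V ⊂⊂ W.  Since finitely many members of T relatively compact in the
   pieces of an open covering cover any such V, and LWC2 controls their
   overlaps, the sheaf condition of F on X_T makes H a sheaf on X.  Restriction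
   s ↦ (s|V) is a morphism F → ρ_*H, and gluing the η_V(t_V) gives a morphism
   H → ρ^{-1}F.  The universal property of ρ^{-1}F makes ρ^{-1}F → H → ρ^{-1}F
   the identity.  So is H(U) → Γ(U; ρ^{-1}F) → H(U): by LWC3 every V ∈ T with
   V ⊂⊂ U satisfies V ⊂⊂ V₁ ⊂⊂ U for some V₁ ∈ T, and on V₁ the composite is
   computed by the unit. *)

Set Implicit Arguments. Unset Strict Implicit.

Section RelativelyCompact.
Variable X : topologicalType.
Implicit Types U V W : set X.

Lemma Opc_open U V : Opc U V -> open V.
Proof. by case. Qed.

Lemma Opc_sub U V : Opc U V -> V `<=` U.
Proof. by case=> _ []. Qed.

Lemma Opc_widen W' W V : open W' -> W' `<=` W -> Opc W' V -> Opc W V.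
Proof.
move=> oW' sW [oV [sV cV]]; split=> //; split; first by move=> x /sV /sW.
move=> I Ui [hUi eU].
have cov : open_covering W' (fun i => Ui i `&` W').
  split=> [i|]; first by split; [apply: openI => //; case: (hUi i)|move=> x []].
  apply/seteqP; split=> [x [i _ []]//|x W'x].
  by have := sW _ W'x; rewrite -eU => -[i _ Uix]; exists i.
have [J [fJ sJ]] := cV I _ cov.
by exists J; split=> // x /sJ [i Ji [Uix _]]; exists i.
Qed.

Lemma Opc_shrink U V V' : Opc U V -> open V' -> V' `<=` V -> Opc U V'.
Proof.
move=> [oV [sV cV]] oV' s; split=> //; split; first by move=> x /s /sV.
by move=> I Ui cov; have [J [fJ sJ]] := cV I Ui cov; exists J; split=> // x /s /sJ.
Qed.

Lemma Opc_setIr U V V' : Opc U V -> open V' -> Opc U (V `&` V').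
Proof.
by move=> cV oV'; apply: Opc_shrink cV (openI (Opc_open cV) oV') _; apply: subIsetl.
Qed.

Lemma Opc_setIl U V V' : open V -> Opc U V' -> Opc U (V `&` V').
Proof. by move=> oV cV'; rewrite setIC; apply: Opc_setIr. Qed.

End RelativelyCompact.

Section Tspace.
Variables (X : topologicalType) (T : set (set X)).
Hypotheses (hT : Tspace T) (hL : locally_weakly_quasi_compact X).
Implicit Types U V W : set X.

Lemma T_open V : T V -> open V.
Proof. by case: hT => + _ _ _ _; apply. Qed.

Lemma T_setI A B : T A -> T B -> T (A `&` B).
Proof. by case: hT => _ _ _ h _ TA TB; case: (h A B TA TB). Qed.

Lemma T_bigcup_finite (I : Type) (J : set I) (f : I -> set X) :
  finite_set J -> (forall i, T (f i)) -> T (\bigcup_(i in J) f i).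
Proof.
case: hT => _ _ T0 TU _ /(finite_image f)/finite_seqP[s Js] Tf.
have {}Tf A : [set` s] A -> T A by rewrite -Js => -[i _ <-].
rewrite -(bigcup_image J f id) {}Js bigcup_seq.
elim: s Tf => [|a s IH] Tf; first by rewrite big_nil.
rewrite big_cons; case: (TU a _ (Tf a (mem_head _ _)) (IH _)) => // A sA.
by apply: Tf; rewrite /= in_cons sA orbT.
Qed.

Lemma T_Opc_nbhs W x : open W -> W x -> exists B, [/\ T B, Opc W B & B x].
Proof.
move=> oW Wx; case: hL => L1 _.
have [O [cO [Ox _]]] := L1 W oW x Wx W (open_nbhs_nbhs (conj oW Wx)).
case: hT => _ basis _ _ _.
have [B [TB Bx sB]] := basis O (Opc_open cO) x Ox.
by exists B; split=> //; apply: Opc_shrink cO (T_open TB) sB.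
Qed.

(* With V' ⊂⊂ W1 ⊂⊂ W2 ⊂⊂ U from LWC3, V is a finite union of members of T
   relatively compact in W2 covering W1. *)
Lemma Opc_interpolate U V' : open U -> Opc U V' ->
  exists V, [/\ T V, Opc V V' & Opc U V].
Proof.
move=> oU cV'; have [_ [_ L3]] := hL.
have [W2 [cUW2 cW2V']] := L3 U oU V' cV'.
have oW2 := Opc_open cUW2.
have [W1 [cW2W1 cW1V']] := L3 W2 oW2 V' cW2V'.
pose B (p : {B : set X | T B /\ Opc W2 B}) := sval p.
have sBW2 p : B p `<=` W2 := Opc_sub (proj2 (svalP p)).
have cov : open_covering W2 B.
  split=> [p|]; first by split; [exact: T_open (proj1 (svalP p))|exact: sBW2].
  apply/seteqP; split=> [x [p _ /sBW2]//|x W2x].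
  have [B0 [TB cB Bx]] := T_Opc_nbhs oW2 W2x.
  by exists (exist _ B0 (conj TB cB)).
have [J [fJ sJ]] := cW2W1.2.2 _ _ cov.
have TV : T (\bigcup_(p in J) B p).
  by apply: T_bigcup_finite => // p; exact: (proj1 (svalP p)).
exists (\bigcup_(p in J) B p); split=> //.
  exact: Opc_widen (Opc_open cW2W1) sJ cW1V'.
by apply: Opc_shrink cUW2 (T_open TV) _ => x [p _ /sBW2].
Qed.

End Tspace.

Section Restriction.
Variables (X : topologicalType) (k : fieldType) (P : set (set X)) (F : presheaf k P).

Lemma resD U V (h : V `<=` U) (s t : sec F U) : res F h (s + t) = res F h s + res F h t.
Proof. by rewrite -[s in LHS]scale1r res_linear scale1r. Qed.

Lemma res0 U V (h : V `<=` U) : res F h 0 = 0.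
Proof. by apply: (addrI (res F h 0)); rewrite addr0 -resD addr0. Qed.

Lemma resZ U V (h : V `<=` U) a (s : sec F U) : res F h (a *: s) = a *: res F h s.
Proof. by rewrite -[a *: s]addr0 res_linear res0 addr0. Qed.

Lemma resN U V (h : V `<=` U) (s : sec F U) : res F h (- s) = - res F h s.
Proof. by rewrite -scaleN1r resZ scaleN1r. Qed.

Lemma res_irrelevant U V (h1 h2 : V `<=` U) (s : sec F U) : res F h1 s = res F h2 s.
Proof. by rewrite (Prop_irrelevance h1 h2). Qed.

End Restriction.

Section LimitSections.
Variables (k : fieldType) (X : topologicalType) (T : set (set X)) (F : presheaf k T).
Implicit Types V W : set X.

Definition lim_index W V := [/\ open W, T V & Opc W V].

(* Elements of the projective limit of the F(V), V ∈ T, V ⊂⊂ W, are compatible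
   families (t_V); they are taken to be 0 off this index set, so that two of
   them are equal as soon as they agree on it (lim_sec_ext). *)
Definition lim_family W (t : forall V, sec F V) :=
  (forall V, ~ lim_index W V -> t V = 0) /\
  (forall V V' (h : V' `<=` V), lim_index W V -> lim_index W V' ->
     res F h (t V) = t V').

Definition lim_sec W := {t : forall V, sec F V | lim_family W t}.

Lemma lim_sec_compat W (t : lim_sec W) V V' (h : V' `<=` V) :
  lim_index W V -> lim_index W V' -> res F h (proj1_sig t V) = proj1_sig t V'.
Proof. exact: (proj2 (proj2_sig t)). Qed.

Lemma lim_sec_ext W (t u : lim_sec W) :
  (forall V, lim_index W V -> proj1_sig t V = proj1_sig u V) -> t = u.
Proof.
case: t u => [t pt] [u pu] /= tu.
have {}tu : t = u.
  apply: functional_extensionality_dep => V.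
  by have [/tu//|nV] := pselect (lim_index W V); rewrite pt.1 ?pu.1.
by subst u; f_equal; exact: Prop_irrelevance.
Qed.

HB.instance Definition _ W := gen_eqMixin (lim_sec W).
HB.instance Definition _ W := gen_choiceMixin (lim_sec W).

Lemma lim_family0 W : lim_family W (fun V => 0).
Proof. by split=> // V V' h _ _; rewrite res0. Qed.

Lemma lim_familyD W (t u : lim_sec W) :
  lim_family W (fun V => proj1_sig t V + proj1_sig u V).
Proof.
case: t u => [t [t0 tc]] [u [u0 uc]]; split=> [V nV|V V' h iV iV'] /=.
  by rewrite t0 // u0 // addr0.
by rewrite resD tc // uc.
Qed.

Lemma lim_familyN W (t : lim_sec W) : lim_family W (fun V => - proj1_sig t V).
Proof.
case: t => [t [t0 tc]]; split=> [V nV|V V' h iV iV'] /=.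
  by rewrite t0 // oppr0.
by rewrite resN tc.
Qed.

Lemma lim_familyZ W a (t : lim_sec W) : lim_family W (fun V => a *: proj1_sig t V).
Proof.
case: t => [t [t0 tc]]; split=> [V nV|V V' h iV iV'] /=.
  by rewrite t0 // scaler0.
by rewrite resZ tc.
Qed.

Definition lim_zero W : lim_sec W := exist _ _ (lim_family0 W).
Definition lim_add W (t u : lim_sec W) : lim_sec W := exist _ _ (lim_familyD t u).
Definition lim_opp W (t : lim_sec W) : lim_sec W := exist _ _ (lim_familyN t).
Definition lim_scale W a (t : lim_sec W) : lim_sec W := exist _ _ (lim_familyZ a t).

Lemma lim_addA W : associative (@lim_add W).
Proof. by move=> t u v; apply: lim_sec_ext => V _ /=; rewrite addrA. Qed.

Lemma lim_addC W : commutative (@lim_add W).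
Proof. by move=> t u; apply: lim_sec_ext => V _ /=; rewrite addrC. Qed.

Lemma lim_add0 W : left_id (lim_zero W) (@lim_add W).
Proof. by move=> t; apply: lim_sec_ext => V _ /=; rewrite add0r. Qed.

Lemma lim_addN W : left_inverse (lim_zero W) (@lim_opp W) (@lim_add W).
Proof. by move=> t; apply: lim_sec_ext => V _ /=; rewrite addNr. Qed.

HB.instance Definition _ W :=
  GRing.isZmodule.Build (lim_sec W) (@lim_addA W) (@lim_addC W) (@lim_add0 W) (@lim_addN W).

Lemma lim_scaleA W a b (t : lim_sec W) : lim_scale a (lim_scale b t) = lim_scale (a * b) t.
Proof. by apply: lim_sec_ext => V _ /=; rewrite scalerA. Qed.

Lemma lim_scale1 W (t : lim_sec W) : lim_scale 1 t = t.
Proof. by apply: lim_sec_ext => V _ /=; rewrite scale1r. Qed.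

Lemma lim_scaleDr W a (t u : lim_sec W) : lim_scale a (t + u) = lim_scale a t + lim_scale a u.
Proof. by apply: lim_sec_ext => V _ /=; rewrite scalerDr. Qed.

Lemma lim_scaleDl W (t : lim_sec W) a b : lim_scale (a + b) t = lim_scale a t + lim_scale b t.
Proof. by apply: lim_sec_ext => V _ /=; rewrite scalerDl. Qed.

HB.instance Definition _ W := GRing.Zmodule_isLmodule.Build k (lim_sec W)
  (@lim_scaleA W) (@lim_scale1 W) (@lim_scaleDr W) (@lim_scaleDl W).

Definition lim_space W : lmodType k := lim_sec W.

Definition lim_trunc W (t : forall V, sec F V) : forall V, sec F V :=
  fun V => if pselect (lim_index W V) then t V else 0.

Lemma lim_truncE W t V : lim_index W V -> lim_trunc W t V = t V.
Proof. by rewrite /lim_trunc; case: pselect. Qed.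

Lemma lim_trunc_family W t :
  (forall V V' (h : V' `<=` V), lim_index W V -> lim_index W V' ->
     res F h (t V) = t V') ->
  lim_family W (lim_trunc W t).
Proof.
move=> tc; split=> [V nV|V V' h iV iV']; first by rewrite /lim_trunc; case: pselect.
by rewrite !lim_truncE //; apply: tc.
Qed.

Lemma lim_index_widen W W' V : open W -> W' `<=` W -> lim_index W' V -> lim_index W V.
Proof. by move=> oW sW [oW' TV cV]; split=> //; apply: Opc_widen cV. Qed.

Lemma lim_index_sub W V : lim_index W V -> V `<=` W.
Proof. by case=> _ _ /Opc_sub. Qed.

Lemma lim_family_res W W' (h : W' `<=` W) (t : lim_sec W) :
  lim_family W' (lim_trunc W' (proj1_sig t)).
Proof.
case: t => [t [t0 tc]]; apply: lim_trunc_family => V V' h' iV iV' /=.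
have [oW|noW] := pselect (open W); first by apply: tc; apply: lim_index_widen oW h _.
by rewrite !t0 ?res0 // => -[].
Qed.

Definition lim_res W W' (h : W' `<=` W) (t : lim_space W) : lim_space W' :=
  exist _ _ (lim_family_res h t).

Lemma lim_res_linear W W' (h : W' `<=` W) a (t u : lim_space W) :
  lim_res h (a *: t + u) = a *: lim_res h t + lim_res h u.
Proof. by apply: lim_sec_ext => V iV; rewrite /= !lim_truncE. Qed.

Lemma lim_res_id W (h : W `<=` W) : open W -> forall t, lim_res h t = t.
Proof. by move=> oW t; apply: lim_sec_ext => V; apply: lim_truncE. Qed.

Lemma lim_res_comp W W' W'' (h' : W' `<=` W) (h'' : W'' `<=` W') (h : W'' `<=` W) :
  open W -> open W' -> open W'' -> forall t, lim_res h'' (lim_res h' t) = lim_res h t.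
Proof.
move=> _ oW' _ t; apply: lim_sec_ext => V iV.
by rewrite /= !lim_truncE //; apply: lim_index_widen oW' h'' iV.
Qed.

Definition lim_presheaf : presheaf k open :=
  Presheaf lim_res_linear lim_res_id lim_res_comp.

Lemma lim_resE W W' (h : W' `<=` W) (t : lim_space W) V :
  lim_index W' V -> proj1_sig (res lim_presheaf h t) V = proj1_sig t V.
Proof. exact: lim_truncE. Qed.

End LimitSections.

Section LimitSheaf.
Variables (k : fieldType) (X : topologicalType) (T : set (set X)) (F : presheaf k T).
Hypotheses (hT : Tspace T) (hL : locally_weakly_quasi_compact X) (hF : is_sheaf_T F).

Section Gluing.
Variables (W : set X) (I : Type) (Ui : I -> set X) (hi : forall i, Ui i `<=` W).
Hypotheses (oW : open W) (oUi : forall i, open (Ui i)) (eU : \bigcup_i Ui i = W).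
Variable s : forall i, lim_space F (Ui i).
Hypothesis hs : forall i j,
  res (lim_presheaf F) (@subIsetl _ (Ui i) (Ui j)) (s i)
  = res (lim_presheaf F) (@subIsetr _ (Ui i) (Ui j)) (s j).

Lemma cover_sec_agree i j D : T D -> Opc (Ui i `&` Ui j) D ->
  proj1_sig (s i) D = proj1_sig (s j) D.
Proof.
move=> TD cD; have iD : lim_index T (Ui i `&` Ui j) D by split=> //; apply: openI.
by have := congr1 (fun t => proj1_sig t D) (hs i j); rewrite /= !lim_truncE.
Qed.

(* Finitely many pieces cover any V ∈ T with V ⊂⊂ W, so the sheaf condition
   of F on X_T glues along them. *)
Record piece := Piece {
  piece_idx : I;
  piece_set : set X;
  piece_T : T piece_set;
  piece_Opc : Opc (Ui piece_idx) piece_set }.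

Definition piece_sec (p : piece) : sec F (piece_set p) :=
  proj1_sig (s (piece_idx p)) (piece_set p).

Lemma lim_index_piece p : lim_index T (Ui (piece_idx p)) (piece_set p).
Proof. by split; [apply: oUi|apply: piece_T|apply: piece_Opc]. Qed.

Lemma pieces_cover V : lim_index T W V ->
  exists J : set piece, finite_set J /\ \bigcup_(p in J) (piece_set p `&` V) = V.
Proof.
move=> [_ _ cV].
have cov : open_covering W piece_set.
  split=> [p|]; first by split; [exact: T_open (piece_T p)|
    by move=> x /(Opc_sub (piece_Opc p)) /hi].
  apply/seteqP; split=> [x [p _ /(Opc_sub (piece_Opc p)) /hi]//|x].
  rewrite -eU => -[i _ Uix].
  have [B [TB cB Bx]] := T_Opc_nbhs hT hL (oUi i) Uix.
  by exists (Piece TB cB).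
have [J [fJ sJ]] := cV.2.2 _ _ cov.
exists J; split=> //; apply/seteqP; split=> [x [p _ []]//|x Vx].
by have [p Jp px] := sJ x Vx; exists p.
Qed.

(* LWC2 makes the overlap of two pieces relatively compact in the overlap of
   their ambient Ui, where the given sections agree. *)
Lemma piece_sec_agree p q D (hp : D `<=` piece_set p) (hq : D `<=` piece_set q) :
  T D -> res F hp (piece_sec p) = res F hq (piece_sec q).
Proof.
case: p hp => i a Ta ca hp; case: q hq => j b Tb cb hq TD /=.
have Tab := T_setI hT Ta Tb.
have [_ [LWC2 _]] := hL.
have cab : Opc (Ui i `&` Ui j) (a `&` b) by apply: LWC2.
have sDab : D `<=` a `&` b by move=> x Dx; split; [exact: hp|exact: hq].
rewrite /piece_sec /= -(res_comp (@subIsetl _ a b) sDab hp Ta Tab TD).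
rewrite -(res_comp (@subIsetr _ a b) sDab hq Tb Tab TD).
rewrite (lim_sec_compat (s i) (@subIsetl _ a b)); last 2 first.
- by split.
- by split=> //; apply: Opc_setIr ca (T_open hT Tb).
rewrite (lim_sec_compat (s j) (@subIsetr _ a b)); last 2 first.
- by split.
- by split=> //; apply: Opc_setIl (T_open hT Ta) cb.
by rewrite (cover_sec_agree Tab cab).
Qed.

Lemma glue_pieces V : lim_index T W V ->
  exists u : sec F V,
    (forall p, res F (@subIsetr _ (piece_set p) V) u
               = res F (@subIsetl _ (piece_set p) V) (piece_sec p)) /\
    (forall u', (forall p, res F (@subIsetr _ (piece_set p) V) u'
                 = res F (@subIsetl _ (piece_set p) V) (piece_sec p)) -> u' = u).
Proof.
move=> iV; have [_ TV _] := iV.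
have TpV (p : piece) : T (piece_set p `&` V) := T_setI hT (piece_T p) TV.
apply: (hF TV _ TpV (pieces_cover iV)) => p q.
have TpVqV := T_setI hT (TpV p) (TpV q).
have sp : piece_set p `&` V `&` (piece_set q `&` V) `<=` piece_set p by move=> x [[]].
have sq : piece_set p `&` V `&` (piece_set q `&` V) `<=` piece_set q by move=> x [_ []].
rewrite (res_comp _ _ sp (piece_T p) (TpV p) TpVqV).
rewrite (res_comp _ _ sq (piece_T q) (TpV q) TpVqV).
exact: piece_sec_agree.
Qed.

Definition glued V : sec F V :=
  if pselect (lim_index T W V) is left iV then sval (cid (glue_pieces iV)) else 0.

Lemma glued_res V p : lim_index T W V ->
  res F (@subIsetr _ (piece_set p) V) (glued V)
  = res F (@subIsetl _ (piece_set p) V) (piece_sec p).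
Proof. by move=> iV; rewrite /glued; case: pselect => // iV'; case: cid => u []. Qed.

Lemma glued_unique V u : lim_index T W V ->
  (forall p, res F (@subIsetr _ (piece_set p) V) u
             = res F (@subIsetl _ (piece_set p) V) (piece_sec p)) ->
  glued V = u.
Proof.
move=> iV hu; rewrite /glued; case: pselect => // iV'.
by case: cid => u0 /= [_ /(_ u hu)].
Qed.

Lemma glued_family : lim_family W glued.
Proof.
split=> [V nV|V V' h iV iV']; first by rewrite /glued; case: pselect.
symmetry; apply: glued_unique => // p.
have [_ TV _] := iV; have [_ TV' _] := iV'.
have Tp := piece_T p.
have TpV := T_setI hT Tp TV; have TpV' := T_setI hT Tp TV'.
have sV : piece_set p `&` V' `<=` V by move=> x [_ /h].
have hh : piece_set p `&` V' `<=` piece_set p `&` V by move=> x [px /h Vx].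
rewrite (res_comp h (@subIsetr _ (piece_set p) V') sV TV TV' TpV').
rewrite -(res_comp (@subIsetr _ (piece_set p) V) hh sV TV TpV TpV') glued_res //.
exact: res_comp.
Qed.

Definition glued_sec : lim_space F W := exist _ _ glued_family.

Lemma glued_sec_res i : res (lim_presheaf F) (@hi i) glued_sec = s i.
Proof.
apply: lim_sec_ext => V [_ TV cV]; rewrite /= lim_truncE //.
apply: glued_unique; first exact: lim_index_widen oW (@hi i) _.
move=> q; apply: (piece_sec_agree (p := Piece TV cV)).
exact: (T_setI hT (piece_T q) TV).
Qed.

Lemma glued_sec_unique t : (forall i, res (lim_presheaf F) (@hi i) t = s i) -> t = glued_sec.
Proof.
move=> ht; apply: lim_sec_ext => V iV /=; symmetry; apply: glued_unique => // q.
have [_ TV cV] := iV.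
have Tb := piece_T q; have ob := T_open hT Tb.
have ib : lim_index T W (piece_set q).
  exact: lim_index_widen oW (@hi _) (lim_index_piece q).
have ibV : lim_index T W (piece_set q `&` V) by split=> //; [apply: T_setI|apply: Opc_setIl].
rewrite /piece_sec -ht /= lim_truncE; last exact: lim_index_piece.
by rewrite !lim_sec_compat.
Qed.

End Gluing.

Lemma lim_presheaf_sheaf : is_sheaf_X (lim_presheaf F).
Proof.
move=> W oW I Ui hi oUi eU s hs.
exists (glued_sec hi oUi eU hs); split; first exact: glued_sec_res.
exact: glued_sec_unique.
Qed.

End LimitSheaf.

Section Unit.
Variables (k : fieldType) (X : topologicalType) (T : set (set X)) (F : presheaf k T).
Hypothesis hT : Tspace T.

Definition lim_unit_family W (s : sec F W) : forall V, sec F V := fun V =>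
  if pselect (T W /\ lim_index T W V) is left p
  then res F (lim_index_sub p.2) s else 0.

Lemma lim_unit_familyE W (s : sec F W) V (h : V `<=` W) :
  T W -> lim_index T W V -> lim_unit_family s V = res F h s.
Proof.
by move=> TW iV; rewrite /lim_unit_family; case: pselect => [?|[]//]; apply: res_irrelevant.
Qed.

Lemma lim_unit_family_out W (s : sec F W) V :
  ~ (T W /\ lim_index T W V) -> lim_unit_family s V = 0.
Proof. by rewrite /lim_unit_family; case: pselect. Qed.

Lemma lim_unit_family_lim W (s : sec F W) : lim_family W (lim_unit_family s).
Proof.
split=> [V nV|V V' h iV iV']; first by apply: lim_unit_family_out => -[].
have [TW|nTW] := pselect (T W); last by rewrite !lim_unit_family_out ?res0 // => -[].
rewrite (lim_unit_familyE s (lim_index_sub iV)) // (lim_unit_familyE s (lim_index_sub iV')) //.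
by have [_ TV _] := iV; have [_ TV' _] := iV'; apply: res_comp.
Qed.

Definition lim_unit W (s : sec F W) : lim_space F W := exist _ _ (lim_unit_family_lim s).

Lemma lim_unit_morphism : is_morphism T F (lim_presheaf F) lim_unit.
Proof.
split=> [W TW a s t|W W' h TW TW' s]; apply: lim_sec_ext => V iV /=.
  by rewrite !(lim_unit_familyE _ (lim_index_sub iV)) // res_linear.
have iWV := lim_index_widen (T_open hT TW) h iV.
rewrite lim_truncE // (lim_unit_familyE _ (lim_index_sub iV)) //.
rewrite (lim_unit_familyE _ (lim_index_sub iWV)) //.
by have [_ TV _] := iV; apply: res_comp.
Qed.

End Unit.

Section Glue.
Variables (k : fieldType) (X : topologicalType) (T : set (set X)) (F : presheaf k T).
Variables (G : presheaf k open) (eta : forall U, sec F U -> sec G U).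
Hypotheses (hT : Tspace T) (hL : locally_weakly_quasi_compact X).
Hypotheses (hG : is_sheaf_X G) (etam : is_morphism T F G eta).

Record Tcompact (W : set X) := TCompact {
  tc_set : set X;
  tc_T : T tc_set;
  tc_Opc : Opc W tc_set }.

Lemma Tcompact_cover W : open W -> \bigcup_(p : Tcompact W) tc_set p = W.
Proof.
move=> oW; apply/seteqP; split=> [x [p _ /(Opc_sub (tc_Opc p))]//|x Wx].
have [B [TB cB Bx]] := T_Opc_nbhs hT hL oW Wx.
by exists (TCompact TB cB).
Qed.

Lemma lim_glue_exists W (t : lim_space F W) : open W ->
  exists u : sec G W,
    (forall p, res G (Opc_sub (tc_Opc p)) u = eta (proj1_sig t (tc_set p))) /\
    (forall u', (forall p, res G (Opc_sub (tc_Opc p)) u' = eta (proj1_sig t (tc_set p))) ->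
       u' = u).
Proof.
move=> oW; have oTc (p : Tcompact W) := T_open hT (tc_T p).
apply: (hG oW _ oTc (Tcompact_cover oW)) => p q.
have [Tp Tq] := (tc_T p, tc_T q); have Tpq := T_setI hT Tp Tq.
rewrite -(etam.2 _ _ _ Tp Tpq) -(etam.2 _ _ _ Tq Tpq).
have ip : lim_index T W (tc_set p) by split=> //; apply: tc_Opc.
have iq : lim_index T W (tc_set q) by split=> //; apply: tc_Opc.
have ipq : lim_index T W (tc_set p `&` tc_set q).
  by split=> //; apply: Opc_setIr (tc_Opc p) (T_open hT Tq).
by rewrite !lim_sec_compat.
Qed.

Definition lim_glue W (t : lim_space F W) : sec G W :=
  if pselect (open W) is left oW then sval (cid (lim_glue_exists t oW)) else 0.

Lemma lim_glue_res W (t : lim_space F W) V (h : V `<=` W) : open W -> T V -> Opc W V ->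
  res G h (lim_glue t) = eta (proj1_sig t V).
Proof.
move=> oW TV cV; rewrite /lim_glue; case: pselect => // oW'.
case: cid => u /= [+ _] => /(_ (TCompact TV cV)) /= <-.
exact: res_irrelevant.
Qed.

Lemma lim_glue_unique W (t : lim_space F W) u : open W ->
  (forall V (h : V `<=` W), T V -> Opc W V -> res G h u = eta (proj1_sig t V)) ->
  lim_glue t = u.
Proof.
move=> oW hu; rewrite /lim_glue; case: pselect => // oW'.
by case: cid => u0 /= [_ u0_uniq]; symmetry; apply: u0_uniq => -[V TV cV]; apply: hu.
Qed.

Lemma lim_glue_morphism : is_morphism open (lim_presheaf F) G lim_glue.
Proof.
split=> [W oW a s t|W W' h oW oW' s].
  apply: lim_glue_unique => // V h TV cV.
  by rewrite res_linear !lim_glue_res // (etam.1 _ TV).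
apply: lim_glue_unique => // V h' TV cV.
rewrite (res_comp h h' (subset_trans h' h) oW oW' (T_open hT TV)).
by rewrite lim_glue_res //= ?lim_truncE //; apply: Opc_widen cV.
Qed.

End Glue.

Lemma is_morphism_comp (k : fieldType) (X : topologicalType) (Q P1 P2 P3 : set (set X))
    (F1 : presheaf k P1) (F2 : presheaf k P2) (F3 : presheaf k P3)
    (f : forall U, sec F1 U -> sec F2 U) (g : forall U, sec F2 U -> sec F3 U) :
  is_morphism Q F1 F2 f -> is_morphism Q F2 F3 g ->
  is_morphism Q F1 F3 (fun U x => g U (f U x)).
Proof.
move=> [fl fr] [gl gr]; split=> [U QU a s t|U V h QU QV s].
  by rewrite fl // gl.
by rewrite fr // gr.
Qed.

Lemma inverse_image_endo_id (k : fieldType) (X : topologicalType) (T : set (set X))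
    (F : presheaf k T) (G : presheaf k open) (eta : forall U, sec F U -> sec G U)
    (f : forall U, sec G U -> sec G U) :
  is_inverse_image F G eta -> is_morphism open G G f ->
  (forall U, T U -> forall s, f U (eta U s) = eta U s) ->
  forall U, open U -> forall x, f U x = x.
Proof.
move=> [hG etam UP] fm feta U oU x.
have [psi [_ _ psi_uniq]] := UP G hG eta etam.
by rewrite (psi_uniq _ fm feta U oU x) -(psi_uniq (fun _ x => x)).
Qed.

Section Isomorphism.
Variables (k : fieldType) (X : topologicalType) (T : set (set X)) (F : presheaf k T).
Variables (G : presheaf k open) (eta : forall U, sec F U -> sec G U).
Hypotheses (hT : Tspace T) (hL : locally_weakly_quasi_compact X).
Hypothesis hinv : is_inverse_image F G eta.
Variable psi : forall U, sec G U -> sec (lim_presheaf F) U.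
Hypothesis psim : is_morphism open G (lim_presheaf F) psi.
Hypothesis psie : forall U, T U -> forall s : sec F U, psi (eta s) = lim_unit s.

Let hG : is_sheaf_X G := let: And3 hG _ _ := hinv in hG.
Let etam : is_morphism T F G eta := let: And3 _ etam _ := hinv in etam.

Lemma psiK W : open W -> cancel (@psi W) (lim_glue hT hL hG etam (W := W)).
Proof.
move=> oW x.
apply: (inverse_image_endo_id (f := fun W x => lim_glue hT hL hG etam (psi x)) hinv) => //.
  exact: is_morphism_comp psim (lim_glue_morphism hT hL hG etam).
move=> V TV s; rewrite psie //; apply: lim_glue_unique (T_open hT TV) _ => V' h TV' cV'.
have iV' : lim_index T V V' by split=> //; exact: (T_open hT TV).
by rewrite /= (lim_unit_familyE _ h) // -(etam.2 _ _ h TV TV').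
Qed.

Lemma lim_glueK U : open U -> cancel (lim_glue hT hL hG etam (W := U)) (@psi U).
Proof.
move=> oU t; apply: lim_sec_ext => V [_ TV cV].
have [V1 [TV1 cV1V cUV1]] := Opc_interpolate hT hL oU cV.
have oV1 := T_open hT TV1.
have iV : lim_index T V1 V by split.
rewrite -(lim_resE (Opc_sub cUV1) _ iV) -(psim.2 _ _ _ oU oV1).
rewrite (lim_glue_res _ _ _ _ _ (Opc_sub cUV1) oU TV1 cUV1) psie //=.
rewrite (lim_unit_familyE _ (Opc_sub cV1V)) //.
by apply: lim_sec_compat; split.
Qed.

Lemma psi_bij U : open U -> bijective (@psi U).
Proof.
by move=> oU; exists (lim_glue hT hL hG etam (W := U)); [apply: psiK|apply: lim_glueK].
Qed.

Lemma eta_psi U V (h : V `<=` U) x : open U -> T V -> Opc U V ->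
  eta (proj1_sig (psi x) V) = res G h x.
Proof. by move=> oU TV cV; rewrite -(lim_glue_res _ _ _ _ _ h oU TV cV) psiK. Qed.

End Isomorphism.

Theorem mainTheorem8 (k : fieldType) (X : topologicalType) (T : set (set X))
    (F : presheaf k T) (G : presheaf k open)
    (eta : forall U, sec F U -> sec G U) (U : set X) :
  Tspace T -> locally_weakly_quasi_compact X ->
  is_sheaf_T F -> is_inverse_image F G eta -> open U ->
  let idx := fun V => T V /\ Opc U V in
  exists Phi : sec G U -> forall V, sec F V,
    [/\ (forall (a : k) (x y : sec G U) V, idx V ->
           Phi (a *: x + y) V = a *: Phi x V + Phi y V),
        (forall x V W (h : W `<=` V), idx V -> idx W ->
           res F h (Phi x V) = Phi x W),
        (forall x y, (forall V, idx V -> Phi x V = Phi y V) -> x = y),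
        (forall t : forall V, sec F V,
           (forall V W (h : W `<=` V), idx V -> idx W -> res F h (t V) = t W) ->
           exists x, forall V, idx V -> Phi x V = t V) &
        (forall x V (h : V `<=` U), idx V -> eta V (Phi x V) = res G h x)].
Proof.
move=> hT hL hF hinv oU idx; have [_ _ UP] := hinv.
have [psi [psim psie _]] :=
  UP _ (lim_presheaf_sheaf hT hL hF) _ (lim_unit_morphism F hT).
have [glue psiK glueK] := psi_bij hT hL hinv psim psie oU.
exists (fun x => proj1_sig (psi U x)); split.
- by move=> a x y V _; rewrite psim.1.
- by move=> x V W h [TV cV] [TW cW]; apply: lim_sec_compat.
- move=> x y xy; apply: (can_inj psiK).
  by apply: lim_sec_ext => V [_ TV cV]; apply: xy.
- move=> t tc.
  have tU : lim_family U (lim_trunc U t).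
    by apply: lim_trunc_family => V W h [_ TV cV] [_ TW cW]; apply: tc.
  by exists (glue (exist _ _ tU)) => V [TV cV]; rewrite glueK /= lim_truncE.
- by move=> x V h [TV cV]; apply: (eta_psi hT hL hinv psim psie).
Qed.
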